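(* For every positive integer $n$, \[ \sum_{j=1}^{n}\left(\binom{n}{j}-1\right)\frac{B_j}{j}\left(1-2^{-j}\right)=\frac{1-2^{n-1}}{2^n}. \]
   Context: $B_j$ is the $j$th Bernoulli number ($\frac{t}{e^t-1}=\sum_{m\ge0}B_m\frac{t^m}{m!}$, so $B_1=-1/2$). *)

From mathcomp Require Import all_boot all_order all_algebra.
Set Implicit Arguments. Unset Strict Implicit. Unset Printing Implicit Defensive.
Import Order.TTheory GRing.Theory Num.Theory.
Local Open Scope ring_scope.

(* Bernoulli numbers B_m (rational), convention B_1 = -1/2, i.e.
   t/(e^t-1) = sum_m B_m t^m/m!.  Equivalently (coefficient comparison in
   (e^t - 1) * sum B_m t^m/m! = t):  B_0 = 1 and for m >= 1,
   sum_{k=0}^{m} C(m+1,k) B_k = 0, i.e.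
   B_m = -(1/(m+1)) * sum_{k<m} C(m+1,k) B_k. *)

Fixpoint bern_list (m : nat) : seq rat :=
  match m with
  | 0 => [:: 1]
  | m'.+1 =>
      let s := bern_list m' in
      rcons s (- (m'.+2%:R)^-1 *
               \sum_(k < m'.+1) ('C(m'.+2, k))%:R * nth 0 s k)
  end.

Definition bernoulli (m : nat) : rat := nth 0 (bern_list m) m.

From mathcomp Require Import all_boot all_order all_algebra.
From mathcomp Require Import ring lra.
Import Order.TTheory GRing.Theory Num.Theory.
Local Open Scope ring_scope.

(* Write w_j = B_j / j * (1 - 2^-j) and S_n for the left-hand side.  Pascal's
   rule gives S_(n+1) - S_n = sum_j C(n, j-1) w_j, and C(n, j-1) / j =
   C(n+1, j) / (n+1) turns this into (1 / (n+1)) sum_j C(n+1, j) B_j (1 - 2^-j).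
   The recurrence kills sum_j C(n+1, j) B_j, while sum_j C(n+1, j) B_j 2^-j is
   2^-(n+1) (B_(n+1)(2) - B_(n+1)) = (n+1) 2^-(n+1), since B_m(2) = B_m(1) + m.
   So S_(n+1) - S_n = -2^-(n+1), and the closed form follows by induction. *)

Lemma size_bern_list m : size (bern_list m) = m.+1.
Proof. by elim: m => //= m IH; rewrite size_rcons IH. Qed.

Lemma nth_bern_list m k : (k <= m)%N -> nth 0 (bern_list m) k = bernoulli k.
Proof.
elim: m => [|m IH]; first by rewrite leqn0 => /eqP ->.
rewrite leq_eqVlt => /orP[/eqP -> //|]; rewrite ltnS => le_km.
by rewrite /= nth_rcons size_bern_list ltnS le_km IH.
Qed.

Lemma bernoulliS m : bernoulli m.+1 =
  - (m.+2%:R)^-1 * \sum_(k < m.+1) 'C(m.+2, k)%:R * bernoulli k.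
Proof.
rewrite {1}/bernoulli /= nth_rcons size_bern_list ltnn eqxx.
by congr (_ * _); apply: eq_bigr => k _; rewrite nth_bern_list // -ltnS.
Qed.

Lemma sum_binomial_bernoulli_lt m : (1 < m)%N ->
  \sum_(k < m) 'C(m, k)%:R * bernoulli k = 0.
Proof.
case: m => [|[|m]] // _.
have m2_neq0 : (m.+2%:R : rat) != 0 by rewrite pnatr_eq0.
by rewrite big_ord_recr /= binSn bernoulliS mulrA mulrN divff // mulN1r subrr.
Qed.

Lemma bernoulli1 : bernoulli 1 = - 2%:R^-1.
Proof. by rewrite bernoulliS big_ord1. Qed.

Lemma sum_binomial_bernoulli k N : (k < N)%N ->
  \sum_(j < N) 'C(k, j)%:R * bernoulli j = bernoulli k + (k == 1%N)%:R.
Proof.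
move=> lt_kN.
have -> : \sum_(j < N) 'C(k, j)%:R * bernoulli j
          = \sum_(j < k.+1) 'C(k, j)%:R * bernoulli j :> rat.
  rewrite [RHS](big_ord_widen N (fun j => 'C(k, j)%:R * bernoulli j)) //.
  rewrite [RHS]big_mkcond; apply: eq_bigr => j _.
  by case: ltnP => // lt_kj; rewrite bin_small // mul0r.
case: k {lt_kN} => [|[|m]].
- by rewrite big_ord1 mul1r addr0.
- by rewrite !big_ord_recr big_ord0 /= bernoulli1.
- by rewrite big_ord_recr /= sum_binomial_bernoulli_lt // binn mul1r add0r addr0.
Qed.

Lemma bin_mul_bin_sub n i j : (i + j <= n)%N ->
  ('C(n, i + j) * 'C(i + j, j) = 'C(n, j) * 'C(n - j, i))%N.
Proof.
move=> le_ijn.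
have le_jn : (j <= n)%N by apply: leq_trans le_ijn; apply: leq_addl.
have le_i_nj : (i <= n - j)%N by rewrite leq_subRL // addnC.
have fact_ij := bin_fact (leq_addl i j); rewrite addnK in fact_ij.
have fact_n_nj := bin_fact le_i_nj; rewrite -subnDA addnC in fact_n_nj.
have facts_gt0 : (0 < j`! * i`! * (n - (i + j))`!)%N by rewrite !muln_gt0 !fact_gt0.
apply/eqP; rewrite -(eqn_pmul2r facts_gt0); apply/eqP.
transitivity n`!; first by rewrite -(bin_fact le_ijn) -fact_ij; ring.
by rewrite -(bin_fact le_jn) -fact_n_nj; ring.
Qed.

Lemma sum_binomial_pow2 k : (\sum_(i < k.+1) 'C(k, i) = 2 ^ k)%N.
Proof.
rewrite -[in RHS](addn1 1) expnDn.
by apply: eq_bigr => i _; rewrite !exp1n !muln1.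
Qed.

Lemma sum_bin_mul_bin n j :
  (\sum_(k < n.+1) 'C(n, k) * 'C(k, j) = 'C(n, j) * 2 ^ (n - j))%N.
Proof.
have [le_jn|lt_nj] := leqP j n; last first.
  rewrite bin_small // mul0n big1 // => k _.
  by rewrite (bin_small (leq_trans (ltn_ord k) lt_nj)) muln0.
rewrite -(big_mkord xpredT (fun k => 'C(n, k) * 'C(k, j))%N).
rewrite (big_cat_nat (n := j)) //=; last by rewrite ltnW.
rewrite big1_seq /= => [|k]; last first.
  by rewrite mem_index_iota => /andP[_ lt_kj]; rewrite (bin_small lt_kj) muln0.
rewrite add0n -{1}[j]add0n big_addn -sum_binomial_pow2 big_distrr /= subSn //.
rewrite big_mkord; apply: eq_bigr => i _; apply: bin_mul_bin_sub.
by rewrite addnC -leq_subRL // -ltnS ltn_ord.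
Qed.

(* [B_m(2) = B_m(1) + m], expanded around [0]. *)
Lemma sum_binomial_bernoulli_pow2 m :
  \sum_(j < m.+1) 'C(m, j)%:R * bernoulli j * 2%:R ^+ (m - j)
  = bernoulli m + (m == 1%N)%:R + m%:R :> rat.
Proof.
transitivity (\sum_(j < m.+1) \sum_(k < m.+1)
    'C(m, k)%:R * ('C(k, j)%:R * bernoulli j) : rat).
  apply: eq_bigr => j _; rewrite -natrX -mulrA [X in _ * X]mulrC mulrA -natrM.
  rewrite -sum_bin_mul_bin natr_sum mulr_suml.
  by apply: eq_bigr => k _; rewrite natrM mulrA.
rewrite exchange_big /=.
rewrite (eq_bigr (fun k : 'I_m.+1 => 'C(m, k)%:R * bernoulli k
    + 'C(m, k)%:R * (nat_of_ord k == 1%N)%:R)) => [|k _]; last first.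
  by rewrite -mulr_sumr sum_binomial_bernoulli // mulrDr.
rewrite big_split /= sum_binomial_bernoulli //; congr (_ + _).
case: m => [|m]; first by rewrite big_ord1 mulr0.
rewrite (bigD1 (Ordinal (isT : (1 < m.+2)%N))) //= bin1 mulr1 big1 ?addr0 //.
move=> k ne_k1; suff /negPf-> : nat_of_ord k != 1%N by rewrite mulr0.
by apply: contra ne_k1 => /eqP k1; apply/eqP/val_inj.
Qed.

Lemma pow2_neq0 k : (2%:R ^+ k : rat) != 0.
Proof. by rewrite expf_eq0 pnatr_eq0 andbF. Qed.

Lemma sum_binomial_bernoulli_halfpow m : (1 < m)%N ->
  \sum_(j < m) 'C(m, j)%:R * bernoulli j / 2%:R ^+ j = m%:R / 2%:R ^+ m :> rat.
Proof.
move=> lt1m.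
have := sum_binomial_bernoulli_pow2 m.
rewrite big_ord_recr /= binn subnn expr0 mul1r mulr1 gtn_eqF // addr0.
rewrite [X in X = _]addrC => /addrI <-; rewrite mulr_suml.
apply: eq_bigr => j _; rewrite exprB ?unitfE ?pow2_neq0 1?ltnW //.
by field; rewrite !pow2_neq0.
Qed.

Definition bernoulli_weight (j : nat) : rat :=
  bernoulli j / j%:R * (1 - (2%:R ^+ j)^-1).

Lemma sum_binomial_weight_step n :
  \sum_(1 <= j < n.+2) ('C(n.+1, j)%:R - 1) * bernoulli_weight j
  = \sum_(1 <= j < n.+1) ('C(n, j)%:R - 1) * bernoulli_weight j
    + \sum_(1 <= j < n.+1) 'C(n, j.-1)%:R * bernoulli_weight j.
Proof.
rewrite big_nat_recr //= binn subrr mul0r addr0 -big_split /=.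
by apply: eq_big_nat => -[|j] // _; rewrite binS natrD; ring.
Qed.

Lemma sum_bin_pred_weight n : (0 < n)%N ->
  \sum_(1 <= j < n.+1) 'C(n, j.-1)%:R * bernoulli_weight j
  = - (2%:R ^+ n.+1)^-1.
Proof.
case: n => [|n] // _.
transitivity ((n.+2%:R)^-1 *
  \sum_(j < n.+2) 'C(n.+2, j)%:R * bernoulli j * (1 - (2%:R ^+ j)^-1)).
  rewrite big_add1 big_mkord [in RHS]big_ord_recl /= expr0 invr1 subrr mulr0 add0r.
  rewrite mulr_sumr; apply: eq_bigr => j _.
  have /(congr1 (GRing.natmul (1 : rat))) := mul_bin_diag n.+2 j.
  rewrite !natrM /bernoulli_weight /bump /= => bin_diag.
  have -> : 'C(n.+2, j.+1)%:R = n.+2%:R * 'C(n.+1, j)%:R / j.+1%:R :> rat.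
    by rewrite bin_diag mulrC mulKf // pnatr_eq0.
  field; rewrite pow2_neq0 /=.
  by have := ler0n rat j; have := ler0n rat n; lra.
under eq_bigr do rewrite mulrBr mulr1.
rewrite sumrB sum_binomial_bernoulli_lt // sub0r.
rewrite sum_binomial_bernoulli_halfpow //.
by field; rewrite pow2_neq0 /=; have := ler0n rat n; lra.
Qed.

Lemma sum_binomial_weight n :
  \sum_(1 <= j < n.+2) ('C(n.+1, j)%:R - 1) * bernoulli_weight j
  = (1 - 2%:R ^+ n) / 2%:R ^+ n.+1.
Proof.
elim: n => [|n IH]; first by rewrite big_nat1 binn subrr mul0r.
rewrite sum_binomial_weight_step IH sum_bin_pred_weight //.
by rewrite !exprS; field; rewrite pow2_neq0.
Qed.

Theorem mainTheorem7 (n : nat) (hn : (0 < n)%N) :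
  \sum_(1 <= j < n.+1)
     (('C(n, j))%:R - 1) * (bernoulli j / j%:R) * (1 - (2%:R ^+ j)^-1)
  = (1 - 2%:R ^+ n.-1) / 2%:R ^+ n :> rat.
Proof.
case: n hn => [|n] // _.
under eq_bigr do rewrite -mulrA.
exact: sum_binomial_weight.
Qed.
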